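(* Let $\mathcal{X}$ be a nonempty convex subset of $\mathbb{R}^n$ and $\mathbf{F}$ a convex interval-valued function on $\mathcal{X}$. Then for every $\bar{x}\in\mathcal{X}$, $\partial\mathbf{F}(\bar{x})$ is closed, i.e., whenever a sequence $\{\widehat{\mathbf{G}}_k\}\subseteq\partial\mathbf{F}(\bar{x})$ converges to $\widehat{\mathbf{G}}\in I(\mathbb{R})^n$, then $\widehat{\mathbf{G}}\in\partial\mathbf{F}(\bar{x})$.
   Context: $I(\mathbb{R})$: nonempty compact intervals $\mathbf{A}=[\underline{a},\overline{a}]$; $\mathbf{A}\oplus\mathbf{B}=[\underline{a}+\underline{b},\overline{a}+\overline{b}]$; $\lambda\odot\mathbf{A}=[\min\{\lambda\underline{a},\lambda\overline{a}\},\max\{\lambda\underline{a},\lambda\overline{a}\}]$; $\mathbf{A}\ominus_{gH}\mathbf{B}=[\min\{\underline{a}-\underline{b},\overline{a}-\overline{b}\},\max\{\underline{a}-\underline{b},\overline{a}-\overline{b}\}]$, applied componentwise on $I(\mathbb{R})^n$; $\mathbf{A}\preceq\mathbf{B}$ iff $\underline{a}\le\underline{b}$ and $\overline{a}\le\overline{b}$; $\|\mathbf{A}\|_{I(\mathbb{R})}=\max\{|\underline{a}|,|\overline{a}|\}$; $\|\widehat{\mathbf{A}}\|_{I(\mathbb{R})^n}=\sqrt{\sum_i\|\mathbf{A}_i\|_{I(\mathbb{R})}^2}$. A sequence $\widehat{\mathbf{G}}_k$ converges to $\widehat{\mathbf{G}}$ if $\|\widehat{\mathbf{G}}_k\ominus_{gH}\widehat{\mathbf{G}}\|_{I(\mathbb{R})^n}\to0$.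 $d^T\odot\widehat{\mathbf{A}}=\bigoplus_i d_i\odot\mathbf{A}_i$. Convex IVF: $\mathbf{F}(\lambda x_1+(1-\lambda)x_2)\preceq\lambda\odot\mathbf{F}(x_1)\oplus(1-\lambda)\odot\mathbf{F}(x_2)$. $gH$-subgradient at $\bar{x}$: $\widehat{\mathbf{G}}\in I(\mathbb{R})^n$ with $(x-\bar{x})^T\odot\widehat{\mathbf{G}}\preceq\mathbf{F}(x)\ominus_{gH}\mathbf{F}(\bar{x})$ for all $x\in\mathcal{X}$; $\partial\mathbf{F}(\bar{x})$ is their set. *)

From HB Require Import structures.
From mathcomp Require Import all_boot all_order all_algebra.
From mathcomp Require Import all_classical all_reals all_analysis.
Import numFieldNormedType.Exports.
Set Implicit Arguments. Unset Strict Implicit. Unset Printing Implicit Defensive.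
Import Order.TTheory GRing.Theory Num.Theory.
Local Open Scope ring_scope.
Local Open Scope classical_set_scope.

Section IntervalAnalysis.
Variable R : realType.

Record Ival := mkIval { ilo : R; ihi : R; ival_wf : ilo <= ihi }.

Definition iadd (A B : Ival) : Ival.
Proof. refine (@mkIval (ilo A + ilo B) (ihi A + ihi B) _).
  by apply: lerD; apply: ival_wf. Defined.

Definition iscal (l : R) (A : Ival) : Ival.
Proof. refine (@mkIval (Num.min (l * ilo A) (l * ihi A))
                       (Num.max (l * ilo A) (l * ihi A)) _).
  by rewrite ge_min !le_max !lexx. Defined.

Definition igH (A B : Ival) : Ival.
Proof. refine (@mkIval (Num.min (ilo A - ilo B) (ihi A - ihi B))
                       (Num.max (ilo A - ilo B) (ihi A - ihi B)) _).
  by rewrite ge_min !le_max !lexx. Defined.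

Definition ile (A B : Ival) : Prop := ilo A <= ilo B /\ ihi A <= ihi B.

Definition inorm (A : Ival) : R := Num.max `|ilo A| `|ihi A|.

Definition izero : Ival := @mkIval 0 0 (lexx 0).

Definition IvalVec (n : nat) := 'I_n -> Ival.

Definition igHvec n (G H : IvalVec n) : IvalVec n := fun i => igH (G i) (H i).

Definition ivnorm n (G : IvalVec n) : R :=
  Num.sqrt (\sum_(i < n) inorm (G i) ^+ 2).

Definition idot n (d : 'I_n -> R) (G : IvalVec n) : Ival :=
  \big[iadd/izero]_(i < n) iscal (d i) (G i).

Definition ivcvg n (Gs : nat -> IvalVec n) (G : IvalVec n) : Prop :=
  (fun k => ivnorm (igHvec (Gs k) G)) @ \oo --> (0 : R).

Definition convex_setRn n (X : set ('I_n -> R)) : Prop :=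
  forall x1 x2 (l : R), X x1 -> X x2 -> 0 <= l <= 1 ->
    X (fun i => l * x1 i + (1 - l) * x2 i).

Definition convex_ivf n (X : set ('I_n -> R)) (F : ('I_n -> R) -> Ival) : Prop :=
  forall x1 x2 (l : R), X x1 -> X x2 -> 0 <= l <= 1 ->
    ile (F (fun i => l * x1 i + (1 - l) * x2 i))
        (iadd (iscal l (F x1)) (iscal (1 - l) (F x2))).

Definition gH_subdiff n (X : set ('I_n -> R)) (F : ('I_n -> R) -> Ival)
  (xbar : 'I_n -> R) : set (IvalVec n) :=
  [set G | forall x, X x -> ile (idot (fun i => x i - xbar i) G) (igH (F x) (F xbar))].

End IntervalAnalysis.

(** Membership of [G] in the gH-subdifferential at [xbar] is, for each [x],
    a pair of inequalities between the endpoints of [(x - xbar)^T ⊙ G] and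
    those of [F x ⊖gH F xbar].  Those endpoints are sums of minima and maxima
    of [d_i * ilo (G i)] and [d_i * ihi (G i)], so they move by at most
    [(\sum_i |d_i|) * ‖G ⊖gH H‖] when [G] is replaced by [H]: each inequality
    defines a closed set, and so does their intersection. *)
From HB Require Import structures.
From mathcomp Require Import all_boot all_order all_algebra.
From mathcomp Require Import all_classical all_reals all_analysis.
From mathcomp Require Import lra.
Import numFieldNormedType.Exports.
Set Implicit Arguments. Unset Strict Implicit. Unset Printing Implicit Defensive.
Import Order.TTheory GRing.Theory Num.Theory.
Local Open Scope ring_scope.
Local Open Scope classical_set_scope.

Section RealLemmas.
Variable R : realType.

Lemma ler_min_dist (a b c d e : R) : `|a - c| <= e -> `|b - d| <= e ->
  Num.min a b <= Num.min c d + e.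
Proof.
rewrite !ler_norml => /andP[? ?] /andP[? ?].
by rewrite ge_min; apply/orP; have [] := leP c d => ?; [left | right]; lra.
Qed.

Lemma ler_max_dist (a b c d e : R) : `|a - c| <= e -> `|b - d| <= e ->
  Num.max a b <= Num.max c d + e.
Proof.
rewrite !ler_norml => /andP[? ?] /andP[? ?].
by rewrite ge_max; apply/andP; have [] := leP c d => ?; split; lra.
Qed.

Lemma ler_norm_minmax (a b : R) :
  `|a| <= Num.max `|Num.min a b| `|Num.max a b| /\
  `|b| <= Num.max `|Num.min a b| `|Num.max a b|.
Proof. by have [] := leP a b => _; rewrite !le_max !lexx /= orbT. Qed.

Lemma le_of_le_addcvg0 (a t c : R) (u : R^nat) :
  u @ \oo --> 0 -> (forall k, a <= t + c * u k) -> a <= t.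
Proof.
move=> u0 le_atu.
have cu0 : (fun k => c * u k) @ \oo --> 0.
  by rewrite -(mulr0 c); apply: cvgM => //; exact: cvg_cst.
rewrite -subr_le0 -(cvg_lim _ cu0) //; apply: limr_ge; first exact: cvgP cu0.
by near=> k; rewrite lerBlDl.
Unshelve. all: by end_near.
Qed.

End RealLemmas.

Section IntervalVectors.
Variables (R : realType) (n : nat).
Implicit Types (G H : IvalVec R n) (d : 'I_n -> R).

Lemma ilo_idot d G : ilo (idot d G) = \sum_(i < n) ilo (iscal (d i) (G i)).
Proof. exact: (big_morph (@ilo R)). Qed.

Lemma ihi_idot d G : ihi (idot d G) = \sum_(i < n) ihi (iscal (d i) (G i)).
Proof. exact: (big_morph (@ihi R)). Qed.

Lemma inorm_le_ivnorm G i : inorm (G i) <= ivnorm G.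
Proof.
have inorm_ge0 : 0 <= inorm (G i) by rewrite le_max normr_ge0.
rewrite -(ger0_norm inorm_ge0) -sqrtr_sqr ler_sqrt; last first.
  by apply: sumr_ge0 => j _; rewrite sqr_ge0.
by rewrite (bigD1 i) //= lerDl; apply: sumr_ge0 => j _; rewrite sqr_ge0.
Qed.

Lemma dist_endpoints_le_ivnorm G H i :
  `|ilo (G i) - ilo (H i)| <= ivnorm (igHvec H G) /\
  `|ihi (G i) - ihi (H i)| <= ivnorm (igHvec H G).
Proof.
have := inorm_le_ivnorm (igHvec H G) i; rewrite /inorm /= => le_norm.
rewrite [`|ilo _ - _|]distrC [`|ihi _ - _|]distrC.
have [] := ler_norm_minmax (ilo (H i) - ilo (G i)) (ihi (H i) - ihi (G i)).
by split; apply: le_trans le_norm.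
Qed.

Lemma idot_lipschitz d G H :
  let e := (\sum_(i < n) `|d i|) * ivnorm (igHvec H G) in
  ilo (idot d G) <= ilo (idot d H) + e /\ ihi (idot d G) <= ihi (idot d H) + e.
Proof.
rewrite /= ilo_idot ihi_idot ilo_idot ihi_idot mulr_suml -!big_split /=.
have dist_scal i x y : `|x - y| <= ivnorm (igHvec H G) ->
    `|d i * x - d i * y| <= `|d i| * ivnorm (igHvec H G).
  by move=> ?; rewrite -mulrBr normrM ler_wpM2l.
split; apply: ler_sum => i _; have [? ?] := dist_endpoints_le_ivnorm G H i.
- by apply: ler_min_dist; exact: dist_scal.
- by apply: ler_max_dist; exact: dist_scal.
Qed.

Lemma ile_idot_closed d (Gs : nat -> IvalVec R n) G B :
  ivcvg Gs G -> (forall k, ile (idot d (Gs k)) B) -> ile (idot d G) B.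
Proof.
move=> GsG le_GsB.
split; apply: (le_of_le_addcvg0 (c := \sum_(i < n) `|d i|) GsG) => k.
- by apply: le_trans (idot_lipschitz d G (Gs k)).1 _; rewrite lerD2r; case: (le_GsB k).
- by apply: le_trans (idot_lipschitz d G (Gs k)).2 _; rewrite lerD2r; case: (le_GsB k).
Qed.

End IntervalVectors.

Theorem mainTheorem11 (R : realType) (n : nat) (X : set ('I_n -> R))
  (F : ('I_n -> R) -> Ival R) :
  X !=set0 -> convex_setRn X -> convex_ivf X F ->
  forall xbar : 'I_n -> R, X xbar ->
  forall (Gs : nat -> IvalVec R n) (G : IvalVec R n),
    (forall k, gH_subdiff X F xbar (Gs k)) ->
    ivcvg Gs G ->
    gH_subdiff X F xbar G.
Proof.
move=> _ _ _ xbar _ Gs G Gs_sub GsG x Xx.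
by apply: (ile_idot_closed GsG) => k; exact: Gs_sub.
Qed.
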